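(* There is no $4$-$\gamma_t$-critical graph $G$ of order $\Delta(G)+4$ with $\Delta(G)\in\{3,5,7\}$ and $\delta(G)\ge 2$.
   Context: All graphs are finite and simple; $\Delta(G)$, $\delta(G)$ are maximum and minimum degree. A set $S\subseteq V(G)$ is a total dominating set if every vertex of $G$ is adjacent to some vertex of $S$; $\gamma_t(G)$ is the minimum size of such a set. A leaf is a vertex of degree one. A graph $G$ with no isolated vertex is $\gamma_t$-critical if for every vertex $v$ not adjacent to a leaf, $\gamma_t(G-v)<\gamma_t(G)$; it is $m$-$\gamma_t$-critical if moreover $\gamma_t(G)=m$. *)

From mathcomp Require Import all_boot.
Set Implicit Arguments. Unset Strict Implicit. Unset Printing Implicit Defensive.

Definition simple_graph (T : finType) (e : rel T) : Prop :=
  symmetric e /\ irreflexive e.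

Definition deg (T : finType) (e : rel T) (v : T) : nat := #|[set u | e v u]|.

Definition maxdeg (T : finType) (e : rel T) : nat := \max_(v : T) deg e v.

Definition mindeg (T : finType) (e : rel T) : nat :=
  \big[minn/#|T|]_(v : T) deg e v.

Definition is_leaf (T : finType) (e : rel T) (v : T) : bool := deg e v == 1.

Definition is_tds (T : finType) (e : rel T) (V S : {set T}) : bool :=
  (S \subset V) && [forall x in V, exists y in S, e x y].

Definition gammat_on (T : finType) (e : rel T) (V : {set T}) : nat :=
  \big[minn/#|T|.+1]_(S : {set T} | is_tds e V S) #|S|.

Definition gammat (T : finType) (e : rel T) : nat := gammat_on e setT.

Definition no_isolated (T : finType) (e : rel T) : Prop :=
  forall v : T, 0 < deg e v.

Definition gammat_critical (T : finType) (e : rel T) : Prop :=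
  no_isolated e /\
  forall v : T, ~~ [exists u, e v u && is_leaf e u] ->
    gammat_on e (setT :\ v) < gammat e.

Definition m_gammat_critical (m : nat) (T : finType) (e : rel T) : Prop :=
  gammat_critical e /\ gammat e = m.

From mathcomp Require Import all_boot zify.
Set Implicit Arguments. Unset Strict Implicit. Unset Printing Implicit Defensive.

(* Let [v] have maximum degree; the vertices outside the closed neighbourhood of [v] form a
   set [A] of 3 vertices.  As [gammat = 4], no three vertices totally dominate [G]; as [G] is
   critical and has no leaves, every [G - w] has a total dominating set of at most 3 vertices
   avoiding the closed neighbourhood of [w].  For [w = v] this set lies in [A], so every vertex
   other than [v] has a neighbour in [A], and [G[A]] is a path [a1 - c - a2].  The neighbours of
   [v] then split into the common neighbours [P] of [v] and [a2] and [Q] of [v] and [a1].  The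
   deletion sets of vertices of [P] and [Q] show that any [x] in one side and [y] in the other
   have a common non-neighbour in the side of [x], and that every vertex [y] of a side with at
   least two vertices is the only vertex of its side adjacent to neither end of some edge
   between the sides.  Counting (a vertex [x] can play this role for at most half of the other
   side) excludes [|P| + |Q| = 3, 5, 7] except for the sizes [3 + 4], which is ruled out by a
   direct analysis. *)

Lemma geq_bigmin_cond (I : finType) (P : pred I) (F : I -> nat) d i :
  P i -> \big[minn/d]_(j | P j) F j <= F i.
Proof.
move=> Pi; have : i \in index_enum I := mem_index_enum i.
elim: (index_enum I) => [//|j r IH]; rewrite inE big_cons => /orP [/eqP <-|ir].
  by rewrite Pi geq_minl.
by case: (P j); [exact: leq_trans (geq_minr _ _) (IH ir) | exact: IH].
Qed.

Lemma bigmin_ltn_witness (I : finType) (P : pred I) (F : I -> nat) d c :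
  \big[minn/d]_(j | P j) F j < c -> c <= d -> exists2 j, P j & F j < c.
Proof.
move=> + cd; elim: (index_enum I) => [|j r IH]; rewrite ?big_nil ?big_cons.
  by rewrite ltnNge cd.
case Pj: (P j) => //; rewrite gtn_min => /orP [|]; last exact: IH.
by exists j.
Qed.

Lemma leq_bigmin_idx (I : finType) (P : pred I) (F : I -> nat) d :
  \big[minn/d]_(j | P j) F j <= d.
Proof. by elim/big_rec: _ => // i x _; apply: leq_trans (geq_minr _ _). Qed.

Section FiniteSets.
Variable T : finType.
Implicit Types (S K : {set T}) (a b d : T).

Lemma cards3P S : #|S| = 3 ->
  exists a b d, [/\ a != b, a != d, b != d & S = [set a; b; d]].
Proof.
move=> S3; have /card_gt0P [a aS] : 0 < #|S| by rewrite S3.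
have /cards2P [b [d [bd Sa]]] : #|S :\ a| == 2.
  by move: S3; rewrite (cardsD1 a) aS add1n => -[->].
have : (b \in S :\ a) && (d \in S :\ a) by rewrite Sa !inE !eqxx orbT.
rewrite !inE => /andP [/andP [ba _] /andP [da _]].
exists a, b, d; split; rewrite 1?(eq_sym a) //.
by rewrite -setUA -Sa setD1K.
Qed.

Lemma subset_card_eq_setU1 S K : K \subset S -> #|S| = #|K|.+1 ->
  exists t, [/\ t \in S, t \notin K & S = t |: K].
Proof.
move=> KS cS; have /cards1P [t St] : #|S :\: K| == 1.
  by rewrite cardsD (setIidPr KS) cS subSnn.
have : t \in S :\: K by rewrite St set11.
rewrite inE => /andP [tK tS]; exists t; split => //.
by rewrite -{1}(setID S K) (setIidPr KS) St setUC.
Qed.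

Lemma card3_eq_set3 S a b d : #|S| <= 3 -> a \in S -> b \in S -> d \in S ->
  a != b -> a != d -> b != d -> S = [set a; b; d].
Proof.
move=> S3 aS bS dS ab ad bd; apply/eqP; rewrite eq_sym eqEcard.
have -> : [set a; b; d] \subset S.
  by apply/subsetP => u; rewrite !inE -orbA => /or3P [] /eqP ->.
by rewrite (leq_trans S3) // -setUA !cardsU1 cards1 !inE (negbTE ab) (negbTE ad) (negbTE bd).
Qed.

Lemma set3P u a b d : reflect [\/ u = a, u = b | u = d] (u \in [set a; b; d]).
Proof.
rewrite !inE -orbA; apply: (iffP or3P) => -[] /eqP ->;
  by [constructor 1 | constructor 2 | constructor 3 | rewrite eqxx ?orbT].
Qed.

End FiniteSets.

Section TwoSides.
Variables (T : finType) (e : rel T).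
Hypotheses (sym_e : symmetric e) (irr_e : irreflexive e).
Implicit Types (X Y : {set T}) (u w x y z q : T).

Definition common_nonneighbours X Y :=
  forall x y, x \in X -> y \in Y -> exists u, [/\ u \in X, ~~ e u x & ~~ e u y].

Definition sole_nonneighbour Y w q y :=
  forall u, u \in Y -> (~~ e u q && ~~ e u w) = (u == y).

Definition edge_isolated X Y :=
  forall y, y \in Y -> exists w q, [/\ w \in X, q \in Y, e w q & sole_nonneighbour Y w q y].

Definition isolated_via Y x : {set T} :=
  [set y in Y | [exists q in Y, e x q && [forall u in Y, (~~ e u q && ~~ e u x) == (u == y)]]].

(* Each [y] isolated via [x] is a non-neighbour of [x] and is determined by the neighbour
   [q] of [x] isolating it, so both parts of the split of [Y] by adjacency to [x] are at
   least as large as [isolated_via Y x]. *)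
Lemma card_isolated_via Y x : 2 * #|isolated_via Y x| <= #|Y|.
Proof.
set W := isolated_via Y x; set E := [set u in Y | ~~ e u x].
pose f q := odflt q [pick u in Y | ~~ e u q && ~~ e u x].
have WY : W \subset Y by apply/subsetP => y; rewrite inE => /andP [].
have WE : W \subset E.
  apply/subsetP => y; rewrite !inE => /andP [yY /existsP [q /and3P [qY _ /forallP h]]].
  by move: (h y); rewrite yY eqxx => /eqP /andP [_ ->].
have Wf : W \subset f @: (Y :\: E).
  apply/subsetP => y; rewrite inE => /andP [yY /existsP [q /and3P [qY exq /forallP h]]].
  have -> : y = f q.
    rewrite /f; case: pickP => [u /andP [uY hu]|none].
      by move: (h u); rewrite uY hu => /eqP /esym /eqP ->.
    by move: (h y) (none y); rewrite yY eqxx /= => /eqP ->.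
  by apply: imset_f; rewrite !inE qY (sym_e q x) exq.
have W_le_nbrs : #|W| <= #|Y :\: E| := leq_trans (subset_leq_card Wf) (leq_imset_card _ _).
have nbrs_le : #|Y :\: E| <= #|Y :\: W| := subset_leq_card (setDS _ WE).
have : #|W| <= #|Y| - #|W| by rewrite -(cardsDS WY); exact: leq_trans W_le_nbrs nbrs_le.
by rewrite mul2n -addnn -leq_subRL // subset_leq_card.
Qed.

Lemma isolated_via_cover X Y y : edge_isolated X Y -> y \in Y ->
  exists2 x, x \in X & y \in isolated_via Y x.
Proof.
move=> hU yY; have [w [q [wX qY ewq H]]] := hU y yY.
exists w => //; rewrite inE yY; apply/existsP; exists q; rewrite qY ewq /=.
by apply/forallP => u; apply/implyP => uY; rewrite H.
Qed.

Lemma edge_isolated_small X Y : #|X| <= 2 -> 2 <= #|Y| -> (#|X| = 2 -> odd #|Y|) ->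
  edge_isolated X Y -> False.
Proof.
move=> X2 Y2 oddY hU; move: X2; rewrite leq_eqVlt ltnS leq_eqVlt ltnS leqn0 => /or3P [] cX.
- have /cards2P [x1 [x2 [_ EX]]] := cX.
  have cov : Y \subset isolated_via Y x1 :|: isolated_via Y x2.
    apply/subsetP => z zY; have [x xX hz] := isolated_via_cover hU zY.
    by rewrite in_setU; move: xX hz; rewrite EX !inE => /orP [] /eqP -> ->; rewrite ?orbT.
  have cov_le := leq_trans (subset_leq_card cov) (leq_card_setU _ _).
  have half1 := card_isolated_via Y x1; have half2 := card_isolated_via Y x2.
  have Y_even : #|Y| = 2 * #|isolated_via Y x1| by lia.
  by move: (oddY (eqP cX)); rewrite Y_even mul2n odd_double.
- have /cards1P [x EX] := cX.
  have cov : Y \subset isolated_via Y x.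
    apply/subsetP => z zY; have [x' xX hz] := isolated_via_cover hU zY.
    by move: xX hz; rewrite EX inE => /eqP ->.
  have := card_isolated_via Y x; have := subset_leq_card cov; lia.
- have [y yY] : exists y, y \in Y by apply/card_gt0P; exact: leq_trans Y2.
  have [w [q [wX _ _ _]]] := hU y yY.
  by move: cX; rewrite cards_eq0 => /eqP X0; rewrite X0 inE in wX.
Qed.

Definition misses_only X z x := forall u, u \in X -> (~~ e u z) = (u == x).

Lemma lone_nonneighbour X Y : #|X| = 3 -> common_nonneighbours X Y -> edge_isolated Y X ->
  forall x, x \in X -> exists2 z, z \in Y & misses_only X z x.
Proof.
move=> X3 hD hU x xX.
have [z [q [zY qX ezq H]]] := hU x xX.
have qx : q != x by move: (H q qX); rewrite irr_e (sym_e q z) ezq => /esym /negbT.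
have /andP [_ nxz] : ~~ e x q && ~~ e x z by rewrite H // eqxx.
have [r [rX + EX]] : exists r, [/\ r \in X, r \notin [set x; q] & X = r |: [set x; q]].
  apply: subset_card_eq_setU1; first by apply/subsetP => u; rewrite !inE => /orP [] /eqP ->.
  by rewrite X3 cards2 eq_sym qx.
rewrite !inE negb_or => /andP [rx rq].
have memX u : u \in X -> [\/ u = x, u = q | u = r] by rewrite EX setUC => /set3P.
have nrq : ~~ e r q.
  apply/negP => erq.
  have [z' [q' [z'Y q'X ez'q' H']]] := hU r rX.
  move: (H' r rX); rewrite eqxx => /andP [nrq' nrz'].
  have nrx : ~~ e r x.
    case: (memX q' q'X) => ?; subst q' => //; first by rewrite erq in nrq'.
    by rewrite (sym_e r z') ez'q' in nrz'.
  have [z'' [q'' [z''Y q''X ez''q'' H'']]] := hU q qX.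
  move: (H'' q qX); rewrite eqxx => /andP [nqq'' nqz''].
  case: (memX q'' q''X) => ?; subst q''.
  - move: (H'' r rX); rewrite (negbTE rq) nrx /= => /negbFE erz''.
    have [u [uX nur nuz'']] := hD r z'' rX z''Y.
    case: (memX u uX) => ?; subst u.
    + by rewrite (sym_e x z'') ez''q'' in nuz''.
    + by rewrite (sym_e q r) erq in nur.
    + by rewrite erz'' in nuz''.
  - by rewrite (sym_e q z'') ez''q'' in nqz''.
  - by rewrite (sym_e q r) erq in nqq''.
exists z => // u /memX [] ->.
- by rewrite nxz eqxx.
- by rewrite (sym_e q z) ezq (negbTE qx).
- by move: (H r rX); rewrite nrq (negbTE rx) /= => ->.
Qed.

Lemma lone_nonneighbour_fun X Y : #|X| = 3 -> common_nonneighbours X Y -> edge_isolated Y X ->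
  exists z : T -> T, forall x, x \in X -> z x \in Y /\ misses_only X (z x) x.
Proof.
move=> X3 hD hU.
exists (fun x => odflt x [pick z in Y | [forall u in X, (~~ e u z) == (u == x)]]) => x xX.
case: pickP => [z /andP [zY /forallP Hz] | none]; first by split=> // u uX; apply/eqP/(implyP (Hz u)).
have [z zY Hz] := lone_nonneighbour X3 hD hU xX.
by move: (none z); rewrite zY; case/forallP => u; apply/implyP => uX; rewrite Hz.
Qed.

Lemma three_four_edges_split X Y (z : T -> T) w j k t :
  X = [set w; j; k] -> w != j -> w != k -> j != k ->
  Y = t |: z @: X -> t \notin z @: X -> (forall x, x \in X -> misses_only X (z x) x) ->
  common_nonneighbours Y X -> edge_isolated X Y ->
  sole_nonneighbour Y w (z j) (z w) -> sole_nonneighbour Y w (z k) t -> False.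
Proof.
move=> EX wj wk jk EY tz Hz hD hU H1 Ht.
have [wX jX kX] : [/\ w \in X, j \in X & k \in X] by rewrite EX !inE !eqxx !orbT.
have memY u : u \in Y -> [\/ u = z w, u = z j, u = z k | u = t].
  rewrite EY => /setU1P [->|/imsetP [x + ->]]; first exact: Or44.
  by rewrite EX => /set3P [] ->; [apply: Or41 | apply: Or42 | apply: Or43].
have [twz tzj] : t != z w /\ t != z j.
  by split; apply: contraNneq tz => ->; apply: imset_f.
have [tY zwY zjY] : [/\ t \in Y, z w \in Y & z j \in Y].
  by rewrite EY !inE eqxx !imset_f ?orbT.
have nzww : ~~ e (z w) w by rewrite sym_e Hz // eqxx.
have ezwj : e (z w) j by rewrite sym_e; apply/negbFE; rewrite Hz // eq_sym (negbTE wj).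
have ezwk : e (z w) k by rewrite sym_e; apply/negbFE; rewrite Hz // eq_sym (negbTE wk).
have nzjj : ~~ e (z j) j by rewrite sym_e Hz // eqxx.
have ezjw : e (z j) w by rewrite sym_e; apply/negbFE; rewrite Hz // (negbTE wj).
have ezjk : e (z j) k by rewrite sym_e; apply/negbFE; rewrite Hz // eq_sym (negbTE jk).
have ezkj : e (z k) j by rewrite sym_e; apply/negbFE; rewrite Hz // (negbTE jk).
move: (Ht _ zwY); rewrite nzww andbT eq_sym (negbTE twz) => /negbFE ezwzk.
move: (Ht _ tY); rewrite eqxx => /andP [ntzk ntw].
move: (H1 _ tY); rewrite ntw andbT (negbTE twz) => /negbFE etzj.
have ntzw : ~~ e t (z w).
  have [u [/memY uY nuzw nuk]] := hD _ _ zwY kX.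
  case: uY => ?; subst u => //.
  - by rewrite ezwk in nuk.
  - by rewrite ezjk in nuk.
  - by rewrite sym_e ezwzk in nuzw.
have ntj : ~~ e t j.
  have [u [/memY uY nut nuj]] := hD _ _ tY jX.
  case: uY => ?; subst u => //.
  - by rewrite ezwj in nuj.
  - by rewrite sym_e etzj in nut.
  - by rewrite ezkj in nuj.
have [w' [q [w'X /memY qY ew'q H]]] := hU _ zjY.
move: (H _ zjY); rewrite eqxx => /andP [_ nzjw'].
have ? : w' = j.
  move: w'X; rewrite EX => /set3P [] ? //; subst w'.
  - by rewrite ezjw in nzjw'.
  - by rewrite ezjk in nzjw'.
subst w'; move: (H _ tY); rewrite ntj andbT (negbTE tzj) => /negbFE etq.
case: qY => ?; subst q.
- by rewrite etq in ntzw.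
- by rewrite sym_e ew'q in nzjj.
- by rewrite etq in ntzk.
- by rewrite irr_e in etq.
Qed.

Lemma edge_isolated_three_four X Y : #|X| = 3 -> #|Y| = 4 ->
  common_nonneighbours X Y -> common_nonneighbours Y X ->
  edge_isolated Y X -> edge_isolated X Y -> False.
Proof.
move=> X3 Y4 hDX hDY hUX hUY.
have [z Hz] := lone_nonneighbour_fun X3 hDX hUX.
have z_inj : {in X &, injective z}.
  move=> x x' xX x'X zxx'; move: ((Hz x' x'X).2 x xX).
  by rewrite -zxx' ((Hz x xX).2 x xX) eqxx => /esym /eqP.
have [t [tY tz EY]] : exists t, [/\ t \in Y, t \notin z @: X & Y = t |: z @: X].
  apply: subset_card_eq_setU1; last by rewrite (card_in_imset z_inj) X3 Y4.
  by apply/subsetP => _ /imsetP [x xX ->]; exact: (Hz x xX).1.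
have [w [qt [wX qtY ewqt Ht]]] := hUY _ tY.
move: (Ht _ tY); rewrite eqxx => /andP [_ ntw].
have zwY : z w \in Y := (Hz w wX).1.
have [w' [q1 [w'X q1Y ew'q1 H1]]] := hUY _ zwY.
have ? : w' = w.
  by move: (H1 _ zwY); rewrite eqxx (sym_e _ w') (Hz w wX).2 // => /andP [_ /eqP].
subst w'.
have other q : q \in Y -> e w q -> exists2 j, j \in X & (j != w) && (q == z j).
  rewrite EY => /setU1P [->|/imsetP [j jX ->] ewzj]; first by rewrite sym_e (negbTE ntw).
  exists j => //; rewrite eqxx andbT; apply: contraTneq ewzj => ->.
  by rewrite (Hz w wX).2 // eqxx.
have [j jX /andP [jw /eqP ?]] := other _ q1Y ew'q1.
have [k kX /andP [kw /eqP ?]] := other _ qtY ewqt.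
subst q1 qt.
have jk : j != k.
  apply: contraNneq tz => jk; rewrite {}jk in H1.
  by move: (H1 _ tY); rewrite (Ht _ tY) eqxx => /esym /eqP ->; apply: imset_f.
have EX : X = [set w; j; k] by apply: card3_eq_set3; rewrite ?X3 // eq_sym.
apply: (three_four_edges_split EX _ _ jk EY tz _ hDY hUY H1 Ht); rewrite 1?eq_sym //.
by move=> x /Hz [].
Qed.

Lemma split_3_5_7 a b : a <= b -> a + b \in [:: 3; 5; 7] ->
  (a <= 2 /\ 2 <= b /\ (a = 2 -> odd b)) \/ (a = 3 /\ b = 4).
Proof.
move=> ab sum357; have sum7 : a + b <= 7 by move: sum357; rewrite !inE => /or3P [] /eqP ->.
have b7 : b <= 7 := leq_trans (leq_addl a b) sum7.
move: ab sum357 b7 {sum7}.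
by case: a => [|[|[|[|[|[|[|[|a]]]]]]]]; case: b => [|[|[|[|[|[|[|[|b]]]]]]]] //;
  by [left; do !split | right].
Qed.

Lemma edge_isolated_split X Y :
  common_nonneighbours X Y -> common_nonneighbours Y X ->
  (2 <= #|X| -> edge_isolated Y X) -> (2 <= #|Y| -> edge_isolated X Y) ->
  #|X| + #|Y| \notin [:: 3; 5; 7].
Proof.
wlog XY : X Y / #|X| <= #|Y|.
  move=> H; case: (leqP #|X| #|Y|) => [|/ltnW YX]; first exact: H.
  by move=> hXY hYX hUX hUY; rewrite addnC; apply: H.
move=> hDX hDY hUX hUY; apply/negP => sum357.
case: (split_3_5_7 XY sum357) => [[X2 [Y2 oddY]] | [X3 Y4]].
- exact: edge_isolated_small X2 Y2 oddY (hUY Y2).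
- by apply: (edge_isolated_three_four X3 Y4 hDX hDY (hUX _) (hUY _)); rewrite ?X3 ?Y4.
Qed.

End TwoSides.

Definition no_tds3 (T : finType) (e : rel T) :=
  forall a b d : T, exists u, [&& ~~ e u a, ~~ e u b & ~~ e u d].

(* For a vertex [w] of a critical graph, a minimum TDS [S] of [G - w] cannot contain a
   neighbour of [w], since otherwise it would totally dominate [G]. *)
Definition vertex_deletion_tds3 (T : finType) (e : rel T) :=
  forall w : T, exists S : {set T}, [/\ #|S| <= 3,
    forall s, s \in S -> (s != w) && ~~ e w s & forall u, u != w -> exists2 s, s \in S & e u s].

Section GammatFour.
Variables (T : finType) (e : rel T).
Hypothesis gammat4 : gammat e = 4.

Lemma tds_card_ge4 (S : {set T}) : is_tds e setT S -> 4 <= #|S|.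
Proof. by move=> tdsS; rewrite -gammat4; apply: geq_bigmin_cond. Qed.

Lemma gammat4_no_tds3 : no_tds3 e.
Proof.
move=> a b d; apply/existsP; apply: contraT => none.
suff : 4 <= #|[set a; b; d]|.
  by rewrite -setUA !cardsU1 cards1; case: (a \in _); case: (b \in _).
apply: tds_card_ge4; rewrite /is_tds subsetT; apply/forallP => x; apply/implyP => _.
move: none; rewrite negb_exists => /forallP /(_ x); rewrite -!negb_or negbK.
by case/or3P => hx; apply/existsP; [exists a | exists b | exists d]; rewrite !inE eqxx ?orbT.
Qed.

Lemma gammat4_vertex_deletion_tds3 :
  (forall w, gammat_on e (setT :\ w) < 4) -> vertex_deletion_tds3 e.
Proof.
move=> crit w; have T4 : 4 <= #|T|.+1 by rewrite -gammat4 leq_bigmin_idx.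
have [S /andP [/subsetP Sw /forallP domS] S3] := bigmin_ltn_witness (crit w) T4.
have domS' u : u != w -> exists2 s, s \in S & e u s.
  by move=> uw; move: (domS u); rewrite !inE uw => /existsP [s /andP [sS eus]]; exists s.
exists S; split => // s sS; move: (Sw s sS); rewrite !inE andbT => -> /=.
apply: contraTN S3 => ews; rewrite -leqNgt; apply: tds_card_ge4.
rewrite /is_tds subsetT; apply/forallP => x; apply/implyP => _.
have [->|/domS' [s' s'S exs']] := eqVneq x w; apply/existsP; first by exists s; rewrite sS.
by exists s'; rewrite s'S.
Qed.

End GammatFour.

Definition outside (T : finType) (e : rel T) (v : T) : {set T} :=
  [set u | (u != v) && ~~ e v u].

Definition common_nbrs (T : finType) (e : rel T) (v a : T) : {set T} :=
  [set x | e v x && e a x].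

Section Outside.
Variables (T : finType) (e : rel T).
Hypotheses (sym_e : symmetric e) (irr_e : irreflexive e).
Hypotheses (no3 : no_tds3 e) (del3 : vertex_deletion_tds3 e).

Lemma card_outside v : #|outside e v| + (deg e v).+1 = #|T|.
Proof.
rewrite /deg -(cardsC (outside e v)); congr (_ + _).
have -> : ~: outside e v = v |: [set u | e v u].
  by apply/setP => u; rewrite !inE negb_and !negbK.
by rewrite cardsU1 inE irr_e.
Qed.

Lemma adj_outside v u : u != v -> exists2 a, a \in outside e v & e u a.
Proof.
move=> uv; have [S [_ Sv domS]] := del3 v; have [s sS eus] := domS u uv.
by exists s; rewrite // inE Sv.
Qed.

Lemma outside_nonadjacent v x : e v x ->
  exists a b, [/\ a \in outside e v, b \in outside e v, a != b & ~~ e a b].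
Proof.
move=> evx; have xv : x != v by apply: contraTneq evx => ->; rewrite irr_e.
have [a aout exa] := adj_outside xv.
have [u /and3P [nuv nua nux]] := no3 v a x.
have uv : u != v by apply: contraNneq nux => ->.
have ua : u != a by apply: contraNneq nux => ->; rewrite sym_e.
by exists u, a; rewrite inE uv sym_e nuv.
Qed.

Lemma card3_path (A : {set T}) : #|A| = 3 ->
  (forall a, a \in A -> exists2 b, b \in A & e a b) ->
  (exists a b, [/\ a \in A, b \in A, a != b & ~~ e a b]) ->
  exists a1 a2 c, [/\ A = [set a1; a2; c], e c a1, e c a2 & ~~ e a1 a2].
Proof.
move=> /cards3P [a [b [d [ab ad bd ->]]]] adjA [x [y [/set3P xA /set3P yA xy nxy]]].
have nbr u : u \in [set a; b; d] -> [|| e u a, e u b | e u d].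
  by case/adjA => w /set3P [] -> ->; rewrite ?orbT.
have [aA bA dA] : [/\ a \in [set a; b; d], b \in [set a; b; d] & d \in [set a; b; d]].
  by rewrite !inE !eqxx ?orbT.
move: (nbr _ aA) (nbr _ bA) (nbr _ dA); rewrite !irr_e (sym_e b a) (sym_e d a) (sym_e d b).
case eab: (e a b); case ead: (e a d); case ebd: (e b d) => // _ _ _.
- move: xA yA xy nxy => [] -> [] ->; rewrite ?eqxx // => _;
    by rewrite ?eab ?ead ?ebd ?(sym_e b) ?(sym_e d) ?eab ?ead ?ebd.
- exists b, d, a; split; rewrite ?(sym_e b a) ?(sym_e d a) ?(sym_e d b) ?eab ?ead ?ebd //.
  by apply/setP => u; rewrite !inE; case: (u == a) (u == b) (u == d) => [] [] [].
- exists a, d, b; split; rewrite ?(sym_e b a) ?(sym_e d a) ?(sym_e d b) ?eab ?ead ?ebd //.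
  by apply/setP => u; rewrite !inE; case: (u == a) (u == b) (u == d) => [] [] [].
- by exists a, b, d; split; rewrite ?(sym_e b a) ?(sym_e d a) ?(sym_e d b) ?eab ?ead ?ebd.
Qed.

Section PathOutside.
Variables (v a1 a2 c : T).
Hypothesis outside_v : outside e v = [set a1; a2; c].
Hypotheses (ca1 : e c a1) (ca2 : e c a2) (na12 : ~~ e a1 a2).

Let P := common_nbrs e v a2.
Let Q := common_nbrs e v a1.

Let outsideP u : (u != v) && ~~ e v u = [|| u == a1, u == a2 | u == c].
Proof. by have /setP/(_ u) := outside_v; rewrite !inE -orbA. Qed.

Lemma outside_vertex u : u \in [set a1; a2; c] -> (u != v) && ~~ e v u.
Proof. by rewrite outsideP !inE -orbA. Qed.

Lemma vertex_trichotomy u : [\/ u = v, e v u | u \in [set a1; a2; c]].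
Proof.
have [->|uv] := eqVneq u v; first exact: Or31.
case evu: (e v u); first exact: Or32.
by apply: Or33; rewrite !inE -orbA -outsideP uv evu.
Qed.

Lemma nbr_nonadj_centre x : e v x -> ~~ e c x.
Proof.
move=> evx; have [u /and3P [nuv nuc nux]] := no3 v c x.
case: (vertex_trichotomy u) => [?|evu|/set3P [] ?]; subst => //.
- by rewrite evx in nux.
- by rewrite sym_e evu in nuv.
- by rewrite sym_e ca1 in nuc.
- by rewrite sym_e ca2 in nuc.
Qed.

Lemma nbr_adj_one_end x : e v x -> e a1 x (+) e a2 x.
Proof.
move=> evx; have xv : x != v by apply: contraTneq evx => ->; rewrite irr_e.
have [a aout exa] := adj_outside xv; have [u /and3P [nuv nu1 nux]] := no3 v a1 x.
have one : e a1 x || e a2 x.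
  move: aout exa; rewrite outside_v => /set3P [] -> exa; rewrite !(sym_e _ x) ?exa ?orbT //.
  by rewrite sym_e (negbTE (nbr_nonadj_centre evx)) in exa.
apply: contraTT one; rewrite negb_add => /eqP same; apply: contraNN nux.
case: (vertex_trichotomy u) => [?|evu|/set3P [] ?]; subst.
- by rewrite evx.
- by rewrite sym_e evu in nuv.
- by rewrite same orbb.
- by rewrite -same orbb.
- by rewrite ca1 in nu1.
Qed.

Lemma nbr_sides u : e v u = (u \in P) || (u \in Q).
Proof.
rewrite !inE; case evu: (e v u) => //=.
by move: (nbr_adj_one_end evu); case: (e a1 u); case: (e a2 u).
Qed.

Lemma sides_disjoint x : x \in P -> x \in Q -> False.
Proof.
rewrite !inE => /andP [evx e2x] /andP [_ e1x].
by move: (nbr_adj_one_end evx); rewrite e1x e2x.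
Qed.

Lemma adj_path_centre s : e c s -> (s == a1) || (s == a2).
Proof.
case: (vertex_trichotomy s) => [->|evs|/set3P [] ->]; rewrite ?eqxx ?orbT //.
- have /andP [_] : (c != v) && ~~ e v c by rewrite outsideP eqxx !orbT.
  by rewrite sym_e => /negbTE ->.
- by rewrite (negbTE (nbr_nonadj_centre evs)).
- by rewrite irr_e.
Qed.

Lemma adj_path_end a s : a \in [set a1; a2] -> e a s -> (s == c) || (s \in common_nbrs e v a).
Proof.
move=> aA; have /andP [_ nva] : (a != v) && ~~ e v a.
  by apply: outside_vertex; move: aA; rewrite !inE => ->.
case: (vertex_trichotomy s) => [->|evs|/set3P [] ->]; rewrite ?inE ?eqxx //.
- by rewrite sym_e (negbTE nva).
- by move=> eas; rewrite evs eas orbT.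
- by move: aA; rewrite !inE => /orP [] /eqP ->; rewrite ?irr_e // sym_e (negbTE na12).
- by move: aA; rewrite !inE => /orP [] /eqP ->; rewrite ?irr_e // (negbTE na12).
Qed.

Lemma side_vertex u : u \in P \/ u \in Q -> [/\ u != v, u != a1, u != a2 & u != c].
Proof.
have evu : u \in P \/ u \in Q -> e v u by case; rewrite inE => /andP [].
move=> /evu evu'; have uv : u != v by apply: contraTneq evu' => ->; rewrite irr_e.
have notout : u \notin [set a1; a2; c].
  by apply: contraTN evu' => /outside_vertex /andP [].
by move: notout; rewrite !inE -!orbA !negb_or => /and3P [? ? ?].
Qed.

Lemma sides_common_nonneighbours : common_nonneighbours e P Q.
Proof.
move=> x y xP yQ; move: (xP) (yQ); rewrite !inE => /andP [evx e2x] /andP [_ e1y].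
have [u /and3P [nua1 nux nuy]] := no3 a1 x y.
case: (vertex_trichotomy u) => [?|evu|/set3P [] ?]; subst.
- by rewrite evx in nux.
- move: evu; rewrite nbr_sides => /orP [uP|uQ]; first by exists u.
  by move: uQ; rewrite inE (sym_e a1) (negbTE nua1) andbF.
- by rewrite e1y in nuy.
- by rewrite e2x in nux.
- by rewrite ca1 in nua1.
Qed.

Lemma side_a1_nonadj u : u \in Q -> ~~ e u a2 && ~~ e u c.
Proof.
rewrite inE => /andP [evu e1u]; rewrite !(sym_e u) (nbr_nonadj_centre evu) andbT.
by move: (nbr_adj_one_end evu); rewrite e1u.
Qed.

Section Witness.
Variables (y : T) (S : {set T}).
Hypotheses (yQ : y \in Q) (S3 : #|S| <= 3) (Sy : forall s, s \in S -> (s != y) && ~~ e y s).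
Hypothesis domS : forall u, u != y -> exists2 s, s \in S & e u s.

Lemma a2_in_witness : a2 \in S.
Proof.
have [_ _ _ yc] := side_vertex (or_intror yQ).
have [s sS ecs] : exists2 s, s \in S & e c s by apply: domS; rewrite eq_sym.
case/orP: (adj_path_centre ecs) => /eqP es; subst s => //.
by move: yQ (Sy sS); rewrite inE (sym_e y) => /andP [_ ->]; rewrite andbF.
Qed.

Lemma isolating_edge_centre_in : c \in S -> common_nonneighbours e Q P -> 2 <= #|Q| ->
  exists w q, [/\ w \in P, q \in Q, e w q & sole_nonneighbour e Q w q y].
Proof.
move=> cS hDQP Q2; have [yv _ _ _] := side_vertex (or_intror yQ).
have [s2 s2S evs2] : exists2 s, s \in S & e v s by apply: domS; rewrite eq_sym.
have s2PQ : s2 \in P \/ s2 \in Q by move: evs2; rewrite nbr_sides => /orP [] ->; [left | right].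
have [_ _ s2a2 s2c] := side_vertex s2PQ.
have a2c : a2 != c by apply: contraTneq ca2 => ->; rewrite irr_e.
have ES : S = [set a2; c; s2].
  by apply: card3_eq_set3; rewrite // ?a2_in_witness // eq_sym.
have Q_adj_s2 u : u \in Q -> u != y -> e u s2.
  move=> uQ /domS [s]; rewrite ES => /set3P [] -> //.
  - by have /andP [/negbTE ->] := side_a1_nonadj uQ.
  - by have /andP [_ /negbTE ->] := side_a1_nonadj uQ.
have s2P : s2 \in P.
  case: s2PQ => // s2Q; have /andP [s2y _] := Sy s2S.
  by move: (Q_adj_s2 _ s2Q s2y); rewrite irr_e.
have [q qQ qy] : exists2 q, q \in Q & q != y.
  have /card_gt0P [q /setD1P [qy qQ]] : 0 < #|Q :\ y|.
    by move: Q2; rewrite (cardsD1 y) yQ.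
  by exists q.
have nyq : ~~ e y q.
  have [u [uQ nuq nus2]] := hDQP q s2 qQ s2P.
  have [<- //|uy] := eqVneq u y.
  by rewrite Q_adj_s2 in nus2.
exists s2, q; split => //; first by rewrite sym_e Q_adj_s2.
move=> u uQ; have [->|uy] := eqVneq u y; last by rewrite Q_adj_s2 // andbF.
by rewrite nyq; have /andP [_ ->] := Sy s2S.
Qed.

Lemma isolating_edge_centre_out : c \notin S ->
  exists w q, [/\ w \in P, q \in Q, e w q & sole_nonneighbour e Q w q y].
Proof.
move=> cS; have [_ ya1 ya2 _] := side_vertex (or_intror yQ).
have [s3 s3S e1s3] : exists2 s, s \in S & e a1 s by apply: domS; rewrite eq_sym.
have [s4 s4S e2s4] : exists2 s, s \in S & e a2 s by apply: domS; rewrite eq_sym.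
have s3Q : s3 \in Q.
  by case/orP: (adj_path_end (setU11 _ _) e1s3) => // /eqP es; rewrite -es s3S in cS.
have s4P : s4 \in P.
  have a2A : a2 \in [set a1; a2] by rewrite !inE eqxx orbT.
  by case/orP: (adj_path_end a2A e2s4) => // /eqP es; rewrite -es s4S in cS.
have [_ _ s3a2 _] := side_vertex (or_intror s3Q).
have [_ _ s4a2 _] := side_vertex (or_introl s4P).
have s34 : s3 != s4 by apply: contraTneq s4P => <-; apply/negP => /sides_disjoint; apply.
have ES : S = [set a2; s3; s4].
  by apply: card3_eq_set3; rewrite // ?a2_in_witness // eq_sym.
have Q_adj u : u \in Q -> u != y -> e u s3 || e u s4.
  move=> uQ /domS [s]; rewrite ES => /set3P [] -> eus; rewrite ?eus ?orbT //.
  by have /andP [] := side_a1_nonadj uQ; rewrite eus.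
have e43 : e s4 s3.
  have /andP [s3y _] := Sy s3S.
  by move: (Q_adj _ s3Q s3y); rewrite irr_e sym_e.
exists s4, s3; split => // u uQ; have [->|uy] := eqVneq u y.
  by have /andP [_ ->] := Sy s3S; have /andP [_ ->] := Sy s4S.
by case/orP: (Q_adj _ uQ uy) => ->; rewrite ?andbF.
Qed.

End Witness.

Lemma sides_edge_isolated : common_nonneighbours e Q P -> 2 <= #|Q| -> edge_isolated e P Q.
Proof.
move=> hDQP Q2 y yQ; have [S [S3 Sy domS]] := del3 y.
have [cS|cS] := boolP (c \in S).
- exact: (isolating_edge_centre_in yQ S3 Sy domS cS hDQP Q2).
- exact: (isolating_edge_centre_out yQ S3 Sy domS cS).
Qed.

Lemma deg_sides : deg e v = #|P| + #|Q|.
Proof.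
rewrite /deg (_ : [set u | e v u] = P :|: Q); last first.
  by apply/setP => u; rewrite in_setU -nbr_sides inE.
rewrite cardsU (_ : P :&: Q = set0) ?cards0 ?subn0 //.
apply/setP => u; rewrite in_setI in_set0; apply: negbTE; apply/negP => /andP [uP uQ].
exact: sides_disjoint uP uQ.
Qed.

End PathOutside.

Lemma path_outside_deg v a1 a2 c : outside e v = [set a1; a2; c] ->
  e c a1 -> e c a2 -> ~~ e a1 a2 -> deg e v \notin [:: 3; 5; 7].
Proof.
move=> out12 ca1 ca2 na12.
have out21 : outside e v = [set a2; a1; c] by rewrite out12 (setUC [set a1]).
have DPQ := sides_common_nonneighbours out12 ca1 ca2.
have DQP := sides_common_nonneighbours out21 ca2 ca1.
rewrite (deg_sides out12 ca1 ca2).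
have na21 : ~~ e a2 a1 by rewrite sym_e.
have UQP := sides_edge_isolated out21 ca2 ca1 na21 DPQ.
have UPQ := sides_edge_isolated out12 ca1 ca2 na12 DQP.
exact: edge_isolated_split DPQ DQP UQP UPQ.
Qed.

End Outside.

Theorem mainTheorem5 (T : finType) (e : rel T) :
  simple_graph e ->
  m_gammat_critical 4 e ->
  maxdeg e \in [:: 3; 5; 7] ->
  2 <= mindeg e ->
  #|T| <> maxdeg e + 4.
Proof.
move=> [sym_e irr_e] [[_ crit] gammat4] maxdeg357 mindeg2 cardT.
have no3 := gammat4_no_tds3 gammat4.
have del3 : vertex_deletion_tds3 e.
  apply: gammat4_vertex_deletion_tds3 => // w; rewrite -gammat4; apply: crit.
  apply/existsP => -[u /andP [_ /eqP deg1]].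
  have : mindeg e <= deg e u by apply: geq_bigmin_cond.
  by rewrite deg1 => /(leq_trans mindeg2).
have [v degv] : {v | maxdeg e = deg e v} by apply: (eq_bigmax (deg e)); rewrite cardT addn4.
have out3 : #|outside e v| = 3.
  by apply/eqP; rewrite -(eqn_add2r (deg e v).+1) card_outside // cardT -degv addnC.
have /card_gt0P [x] : 0 < deg e v by rewrite -degv; move: maxdeg357; rewrite !inE => /or3P [] /eqP ->.
rewrite inE => evx.
have adj a : a \in outside e v -> exists2 b, b \in outside e v & e a b.
  by rewrite inE => /andP [av _]; apply: (adj_outside del3).
have [a1 [a2 [c [out_v ca1 ca2 na12]]]] :=
  card3_path sym_e irr_e out3 adj (outside_nonadjacent sym_e irr_e no3 del3 evx).
by move: (path_outside_deg sym_e irr_e no3 del3 out_v ca1 ca2 na12); rewrite -degv maxdeg357.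
Qed.
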